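(* Let $S=\{s_1<\dots<s_{k_1}\}$ and $T=\{t_1<\dots<t_{k_2}\}$ be nonempty subsets of $\{1,\dots,n-1\}$, $d=\gcd\{s+t: s\in S,t\in T\}$, $\mathcal{I}_n=\{-n+1,\dots,n-1\}$, and for positive integers $i$ let $P_i=\{\ell\in\mathcal{I}_n: \ell\equiv is_1\pmod d\}$ and $Q_i=\{\sum_{j=1}^{k_1}a_js_j-\sum_{j=1}^{k_2}b_jt_j\in\mathcal{I}_n : a_j,b_j\in\mathbb{Z}_{\ge0},\ \sum_ja_j+\sum_jb_j=i\}$. Then there exists a positive integer $m^\star$ such that $P_{m^\star}\subseteq Q_{m^\star}$. *)

From mathcomp Require Import all_boot all_order all_algebra.
Set Implicit Arguments. Unset Strict Implicit. Unset Printing Implicit Defensive.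
Import Order.TTheory GRing.Theory Num.Theory.

Definition In_n (n : nat) (l : int) : bool :=
  ((- (n%:Z) < l) && (l < n%:Z))%R.

(* d = gcd { s + t : s in S, t in T }; S, T are subsets of {0..n-1}
   (the theorem additionally requires 0 not in S, T). *)
Definition dST (n : nat) (S T : {set 'I_n}) : nat :=
  \big[gcdn/0%N]_(p in setX S T) (p.1 + p.2)%N.

Definition Pset (n : nat) (S T : {set 'I_n}) (s1 i : nat) (l : int) : Prop :=
  In_n n l /\ (l = (i * s1)%N%:Z %[mod (dST S T)%:Z])%Z.

Definition Qset (n : nat) (S T : {set 'I_n}) (i : nat) (l : int) : Prop :=
  In_n n l /\
  exists (a b : 'I_n -> nat),
    (\sum_(j in S) a j + \sum_(j in T) b j)%N = i /\
    l = (\sum_(j in S) (a j * j)%N%:Z - \sum_(j in T) (b j * j)%N%:Z)%R.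

From mathcomp Require Import all_boot all_order all_algebra.
From mathcomp Require Import zify ring.
Import Order.TTheory GRing.Theory Num.Theory.

Local Open Scope ring_scope.

(* Put s = s_1, fix t in T, and let u_j = s + t_j and w_i = s_i - s.  Since
   s_i + t_j = w_i + u_j, Bezout writes d as an integer combination of the u_j
   and the w_i; shifting coefficients by multiples of g = u_t makes all of them
   nonnegative except for one multiple k g.  For l in P_m both N = m s - l and
   g are multiples of d, so N = q g + r d with 0 <= r < g, and substituting the
   combination for d expresses N as a combination of the u_j and the -w_i.  Its
   coefficients are nonnegative once q >= g |k|, and their sum is at most m
   because q <= N / g <= (m s + n) / (s + 1); both hold once m is large
   compared with n and the coefficients.  Such a combination is exactly an
   element of Q_m. *)

Lemma sum_delta (R : pzSemiRingType) (I : finType) (P : pred I) (i0 : I)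
    (F : I -> R) :
  P i0 -> \sum_(i | P i) (i == i0)%:R * F i = F i0.
Proof.
move=> Pi0; rewrite (bigD1 i0) //= eqxx mul1r big1 ?addr0 // => i /andP[_ /negbTE->].
exact: mul0r.
Qed.

Lemma Posz_sum (I : finType) (A : {pred I}) (F : I -> nat) :
  (\sum_(i in A) F i)%N%:Z = \sum_(i in A) (F i)%:Z.
Proof. exact: (big_morph Posz PoszD). Qed.

Lemma big_gcdn_bezout (I : finType) (P : pred I) (F : I -> nat) :
  exists c : I -> int,
    (\big[gcdn/0%N]_(i | P i) F i)%:Z = \sum_(i | P i) c i * (F i)%:Z.
Proof.
apply: (big_rec (fun x => exists c : I -> int, x%:Z = \sum_(i | P i) c i * (F i)%:Z)).
  by exists (fun _ => 0); rewrite big1 // => i _; rewrite mul0r.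
move=> i x iA [c xE].
have [u [v uvE]] := Bezoutz (F i)%:Z x%:Z.
exists (fun j => v * c j + (j == i)%:R * u).
rewrite -[(gcdn _ _)%:Z]/(gcdz (F i) x) -uvE xE mulr_sumr addrC.
under [in RHS]eq_bigr => j _ do rewrite /= mulrDl -!mulrA.
by rewrite big_split /= sum_delta.
Qed.

Lemma sum_shift_nonneg (I : finType) (P : pred I) (c y : I -> int) (g : int) :
  0 < g -> exists (k : int) (c' : I -> int), (forall i, 0 <= c' i) /\
    \sum_(i | P i) c i * y i = k * g + \sum_(i | P i) c' i * y i.
Proof.
move=> g_gt0; exists (- \sum_(i | P i) `|c i| * y i), (fun i => c i + `|c i| * g).
split=> [i|].
  have := ler_norm (- c i); rewrite normrN; nia.
rewrite mulNr mulr_suml -sumrN -big_split /=.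
by apply: eq_bigr => i _; ring.
Qed.

Lemma divz_dvd_decomp (N g d : int) : 0 < g -> 0 < d ->
  (d %| g)%Z -> (d %| N)%Z ->
  exists q r, N = q * g + r * d /\ 0 <= r /\ r * d < g.
Proof.
move=> g_gt0 d_gt0 dg dN.
have dR : (d %| N %% g)%Z.
  have -> : (N %% g)%Z = N - (N %/ g)%Z * g by rewrite {2}(divz_eq N g); ring.
  by rewrite rpredB // dvdz_mull.
exists (divz N g), (divz (N %% g)%Z d); rewrite [_ * d]divzK //.
split; first exact: divz_eq.
by rewrite divz_ge0 // modz_ge0 ?gt_eqF //; split; [|exact: ltz_pmod].
Qed.

Lemma quotient_lower_bound (N q g n c : int) : 0 < g -> g <= 2 * n -> 0 <= c ->
  N < (q + 1) * g -> 2 * n + 4 * n * n * c <= N -> g * c <= q.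
Proof.
move=> g_gt0 g_le c_ge0 Nq NL; rewrite leNgt; apply/negP => qc.
have : (q + 1) * g <= g * c * g by apply: ler_wpM2r; lia.
have gg : g * g <= 2 * n * (2 * n) by apply: ler_pM; lia.
have : g * c * g <= 4 * n * n * c by rewrite mulrAC; apply: ler_wpM2r => //; lia.
lia.
Qed.

Lemma quotient_upper_bound (N q g s n m x : int) : 0 <= q -> 0 <= s ->
  s + 1 <= g -> q * g <= N -> N <= m * s + n -> (s + 1) * x <= m - n -> q + x <= m.
Proof.
move=> q_ge0 s_ge0 sg qN Nm sx.
have : (s + 1) * q <= q * g by rewrite mulrC; apply: ler_wpM2l.
nia.
Qed.

Section Representation.

Context {n : nat} {S T : {set 'I_n}} {s t : 'I_n}.
Hypotheses (sS : s \in S) (tT : t \in T) (s_gt0 : (0 < s)%N) (t_gt0 : (0 < t)%N).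

Let u (j : 'I_n) : int := s%:Z + j%:Z.
Let w (i : 'I_n) : int := i%:Z - s%:Z.

(* As the coefficients add up to m, sum_i a_i s_i - sum_j b_j t_j equals
   m s - (sum_j b_j u_j - sum_i a_i w_i); a smaller total is padded on the
   coefficient of s, where w vanishes. *)
Lemma Qset_of_repr (m : nat) (l : int) (a b : 'I_n -> int) :
  In_n n l -> (forall i, 0 <= a i) -> (forall j, 0 <= b j) ->
  \sum_(i in S) a i + \sum_(j in T) b j <= m%:Z ->
  m%:Z * s%:Z - l = \sum_(j in T) b j * u j - \sum_(i in S) a i * w i ->
  Qset S T m l.
Proof.
move=> lI a_ge0 b_ge0 ab_le lE; split => //.
set e := m%:Z - (\sum_(i in S) a i + \sum_(j in T) b j).
pose a' i := a i + (i == s)%:R * e.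
have a'_ge0 i : 0 <= a' i by rewrite addr_ge0 ?mulr_ge0 ?subr_ge0.
have absz_mulE (x : int) (y : nat) : 0 <= x -> (absz x * y)%N%:Z = x * y%:Z.
  by move=> x_ge0; rewrite PoszM gez0_abs.
exists (fun i => absz (a' i)), (fun j => absz (b j)); split.
  apply/eqP; rewrite -eqz_nat PoszD !Posz_sum.
  under eq_bigr do rewrite gez0_abs //.
  under [X in _ + X]eq_bigr do rewrite gez0_abs //.
  by rewrite big_split /= sum_delta //= /e; apply/eqP; ring.
rewrite (eq_bigr _ (fun (i : 'I_n) _ => absz_mulE _ i (a'_ge0 i))).
rewrite (eq_bigr _ (fun (j : 'I_n) _ => absz_mulE _ j (b_ge0 j))).
have sum_a' : \sum_(i in S) a' i * i%:Z = \sum_(i in S) a i * i%:Z + e * s%:Z.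
  rewrite /a'; under eq_bigr do rewrite mulrDl -mulrA.
  by rewrite big_split /= sum_delta.
have sum_u : \sum_(j in T) b j * u j =
    s%:Z * \sum_(j in T) b j + \sum_(j in T) b j * j%:Z.
  by rewrite mulr_sumr -big_split; apply: eq_bigr => j _; rewrite /u /=; ring.
have sum_w : \sum_(i in S) a i * w i =
    \sum_(i in S) a i * i%:Z - s%:Z * \sum_(i in S) a i.
  by rewrite mulr_sumr -sumrB; apply: eq_bigr => i _; rewrite /w /=; ring.
have -> : l = m%:Z * s%:Z - (m%:Z * s%:Z - l) by ring.
by rewrite lE sum_u sum_w sum_a' /e; ring.
Qed.

Lemma dST_dvd : (dST S T %| s + t)%N.
Proof. by rewrite /dST (biggcdn_inf (s, t)) // in_setX sS tT. Qed.

Lemma dST_repr : exists (k : int) (al be : 'I_n -> int),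
  [/\ forall j, 0 <= al j, forall i, 0 <= be i &
    (dST S T)%:Z = k * u t + \sum_(j in T) al j * u j - \sum_(i in S) be i * w i].
Proof.
have [c dE] :=
  big_gcdn_bezout _ (fun p => p \in setX S T) (fun p : 'I_n * 'I_n => (p.1 + p.2)%N).
have ut_gt0 : 0 < u t by rewrite /u -PoszD ltz_nat addn_gt0 s_gt0.
have [k1 [al [al_ge0 alE]]] :=
  sum_shift_nonneg _ (fun j => j \in T) (fun j => \sum_(i in S) c (i, j)) u _ ut_gt0.
have [k2 [be [be_ge0 beE]]] :=
  sum_shift_nonneg _ (fun i => i \in S) (fun i => - \sum_(j in T) c (i, j)) w _ ut_gt0.
exists (k1 - k2), al, be; split => //.
have sumX (F : 'I_n * 'I_n -> int) :
    \sum_(p in setX S T) F p = \sum_(i in S) \sum_(j in T) F (i, j).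
  by rewrite pair_big; apply: eq_big => [[i j]|[i j] _] //=; rewrite in_setX.
have sum_uw : \sum_(i in S) \sum_(j in T) c (i, j) * (i + j)%N%:Z =
    \sum_(i in S) \sum_(j in T) c (i, j) * u j +
    \sum_(i in S) \sum_(j in T) c (i, j) * w i.
  rewrite -big_split; apply: eq_bigr => i _; rewrite -big_split; apply: eq_bigr => j _.
  by rewrite /u /w PoszD /=; ring.
have sumT : \sum_(i in S) \sum_(j in T) c (i, j) * u j =
    \sum_(j in T) (\sum_(i in S) c (i, j)) * u j.
  by rewrite exchange_big; apply: eq_bigr => j _; rewrite mulr_suml.
have sumS : \sum_(i in S) \sum_(j in T) c (i, j) * w i =
    - \sum_(i in S) - (\sum_(j in T) c (i, j)) * w i.
  by rewrite -sumrN; apply: eq_bigr => i _; rewrite mulNr opprK mulr_suml.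
by rewrite /dST dE sumX sum_uw sumT sumS alE beE; ring.
Qed.

Section FixedRepr.

Context {k : int} {al be : 'I_n -> int}.
Hypotheses (al_ge0 : forall j, 0 <= al j) (be_ge0 : forall i, 0 <= be i).
Hypothesis dE :
  (dST S T)%:Z = k * u t + \sum_(j in T) al j * u j - \sum_(i in S) be i * w i.

Let C : int := `|k| + \sum_(j in T) al j + \sum_(i in S) be i.
Let coef (q r : int) (j : 'I_n) : int := r * al j + (j == t)%:R * (q + r * k).

Lemma coef_repr (q r : int) :
  q * u t + r * (dST S T)%:Z =
  \sum_(j in T) coef q r j * u j - \sum_(i in S) (r * be i) * w i.
Proof.
rewrite dE /coef /=; under [in RHS]eq_bigr do rewrite mulrDl -!mulrA.
rewrite big_split /= sum_delta // -mulr_sumr.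
by rewrite -(eq_bigr _ (fun i _ => mulrA r (be i) (w i))) -mulr_sumr; ring.
Qed.

Lemma coef_sum (q r : int) :
  \sum_(i in S) r * be i + \sum_(j in T) coef q r j =
  q + r * (k + \sum_(j in T) al j + \sum_(i in S) be i).
Proof. by rewrite /coef /= big_split /= sum_delta // -!mulr_sumr; ring. Qed.

Lemma Qset_of_quotient (m : nat) (l q r : int) :
  In_n n l -> 3 * n%:Z + 4 * n%:Z * n%:Z * C + 1 <= m%:Z ->
  m%:Z * s%:Z - l = q * u t + r * (dST S T)%:Z -> 0 <= r -> r < u t ->
  q * u t <= m%:Z * s%:Z - l < (q + 1) * u t ->
  Qset S T m l.
Proof.
move=> lI m_large NE r_ge0 r_lt /andP[qN Nq].
move: (lI) => /andP[l_gt l_lt].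
have s_lt : s%:Z < n%:Z by rewrite ltz_nat ltn_ord.
have t_lt : t%:Z < n%:Z by rewrite ltz_nat ltn_ord.
have s_ge1 : 1 <= s%:Z by rewrite lez_nat.
have t_ge1 : 1 <= t%:Z by rewrite lez_nat.
have g_le : u t <= 2 * n%:Z by rewrite /u; lia.
have C_ge0 : 0 <= C by rewrite /C !addr_ge0 ?sumr_ge0.
have q_ge : u t * C <= q.
  apply: (@quotient_lower_bound (m%:Z * s%:Z - l) q (u t) n%:Z C) => //; first lia.
  have : m%:Z <= m%:Z * s%:Z by rewrite ler_peMr.
  lia.
have k_le_C : `|k| <= C by rewrite /C -addrA lerDl addr_ge0 ?sumr_ge0.
have rk_le : r * `|k| <= u t * C by apply: ler_pM => //; exact: ltW.
have coef_ge0 j : 0 <= coef q r j.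
  have [k_le Nk_le] : k <= `|k| /\ - k <= `|k| by rewrite ler_norm -normrN ler_norm.
  by rewrite /coef /= addr_ge0 ?mulr_ge0 ?ler0n //; nia.
apply: (@Qset_of_repr m l (fun i => r * be i) (coef q r) lI) => //.
- by move=> i; rewrite mulr_ge0.
- have srC_le : (s%:Z + 1) * (r * C) <= m%:Z - n%:Z.
    have : (s%:Z + 1) * r <= n%:Z * (2 * n%:Z) by apply: ler_pM; lia.
    by rewrite mulrA => /(ler_wpM2r C_ge0); lia.
  have qrC_le : q + r * C <= m%:Z.
    apply: (@quotient_upper_bound (m%:Z * s%:Z - l) q (u t) s%:Z n%:Z) => //.
    + by apply: le_trans q_ge; rewrite mulr_ge0 // ltW.
    + by rewrite /u; lia.
    + lia.
  rewrite coef_sum; apply: le_trans qrC_le.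
  by rewrite lerD2l ler_wpM2l // /C -!addrA lerD2r ler_norm.
- by rewrite NE -coef_repr.
Qed.

Lemma Pset_sub_Qset (m : nat) : 3 * n%:Z + 4 * n%:Z * n%:Z * C + 1 <= m%:Z ->
  forall l, Pset S T s m l -> Qset S T m l.
Proof.
move=> m_large l [lI lmod].
set d := dST S T; set N := m%:Z * s%:Z - l.
have g_gt0 : 0 < u t by rewrite /u -PoszD ltz_nat addn_gt0 s_gt0.
have d_gt0 : 0 < d%:Z by rewrite ltz_nat; apply: dvdn_gt0 dST_dvd; rewrite addn_gt0 s_gt0.
have dg : (d%:Z %| u t)%Z by exact: dST_dvd.
have dN : (d%:Z %| N)%Z by rewrite /N -eqz_mod_dvd -PoszM lmod.
have [q [r [NE [r_ge0 rd_lt]]]] := divz_dvd_decomp _ _ _ g_gt0 d_gt0 dg dN.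
have r_le_rd : r <= r * d%:Z by rewrite ler_peMr // lez_nat.
apply: (@Qset_of_quotient m l q r lI m_large NE r_ge0).
  exact: le_lt_trans rd_lt.
by rewrite -/N NE; apply/andP; split; nia.
Qed.

End FixedRepr.

Lemma Pset_sub_Qset_eventually : exists M : nat,
  forall m, (M <= m)%N -> forall l, Pset S T s m l -> Qset S T m l.
Proof.
have [k [al [be [al_ge0 be_ge0 dE]]]] := dST_repr.
set C := `|k| + \sum_(j in T) al j + \sum_(i in S) be i.
have C_ge0 : 0 <= C by rewrite /C !addr_ge0 ?sumr_ge0.
exists (absz (3 * n%:Z + 4 * n%:Z * n%:Z * C + 1)) => m M_le.
apply: (Pset_sub_Qset al_ge0 be_ge0 dE); rewrite -/C.
have M_ge0 : 0 <= 3 * n%:Z + 4 * n%:Z * n%:Z * C + 1 by rewrite !addr_ge0 ?mulr_ge0.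
by rewrite -(gez0_abs M_ge0) lez_nat.
Qed.

End Representation.

Theorem theorem4p3 (n : nat) (S T : {set 'I_n}) (s1 : nat) :
  S != set0 -> T != set0 ->
  (forall j : 'I_n, j \in S -> (0 < j)%N) ->
  (forall j : 'I_n, j \in T -> (0 < j)%N) ->
  s1 \in [seq val j | j in S] ->
  (forall j : 'I_n, j \in S -> (s1 <= j)%N) ->
  exists m : nat, (0 < m)%N /\ (forall l : int, Pset S T s1 m l -> Qset S T m l).
Proof.
move=> _ /set0Pn[t tT] S_gt0 T_gt0 /imageP[s sS ->] _.
have [M PQ] := Pset_sub_Qset_eventually sS tT (S_gt0 s sS) (T_gt0 t tT).
by exists M.+1; split=> //; apply: PQ.
Qed.
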